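(* Let $\mathfrak a$ and $A$ be as in the context. Let $R$ be an $A$-module with a decreasing filtration by $A$-submodules $\cdots\supseteq{}^{i-1}R\supseteq{}^iR\supseteq{}^{i+1}R\supseteq\cdots$ such that ${}^iR=R$ for $i\ll0$, ${}^iR=0$ for $i\gg0$, and each ${}^iR/{}^{i+1}R$ is projective as an $\mathfrak a$-module. Let $N$ be an admissible hybrid $A$-module and $\phi:R\twoheadrightarrow N$ a surjective $A$-module homomorphism with $\phi({}^iR)=N_{\ge i}$ for every $i\in\mathbb Z$. Then there is a choice of $\mathfrak a_0$-submodules $h_i\subseteq{}^iR$, each an $\mathfrak a_0$-stable complement to ${}^{i+1}R+\mathrm{rad}^\flat({}^iR)$ in ${}^iR$, such that $\phi(h_i)\subseteq N_i$ for all $i$. The $\mathfrak a$-grading on $R$ obtained by placing $h_i$ in grade $i$ (so that $R=\mathfrak a h\cong\bigoplus_i\mathfrak a\otimes_{\mathfrak a_0}h_i$) makes $R$ an admissible hybrid $A$-module and $\phi$ a surjective morphism of admissible hybrid $A$-modules.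
   Context: All algebras/modules finite dimensional over a field. $\mathfrak a=\bigoplus_{n\ge0}\mathfrak a_n$ is positively graded and $\mathfrak a\to A$ is an algebra homomorphism such that $\mathfrak a_{\ge j}A$ is a two-sided ideal of $A$ for each $j\ge0$, where $\mathfrak a_{\ge j}=\bigoplus_{i\ge j}\mathfrak a_i$. For an $\mathfrak a$-module $X$, $\mathrm{rad}^\flat X=\mathfrak a_{\ge1}X$. A hybrid $A$-module is an $A$-module with a fixed grading making it a graded $\mathfrak a$-module (with $\mathfrak a$ acting via $\mathfrak a\to A$); it is admissible if each $N_{\ge j}=\bigoplus_{i\ge j}N_i$ is an $A$-submodule. Morphisms of hybrid modules are $A$-maps preserving gradings. *)

From HB Require Import structures.
From mathcomp Require Import all_boot all_order all_algebra falgebra.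
Set Implicit Arguments. Unset Strict Implicit. Unset Printing Implicit Defensive.
Import Order.TTheory GRing.Theory Num.Theory.
Local Open Scope ring_scope.

Section Defs.
Variable F : fieldType.

Definition is_rep (B : falgType F) (X : vectType F) (sigma : B -> 'End(X)) :=
  [/\ forall (c : F) (a b : B), sigma (c *: a + b) = c *: sigma a + sigma b,
      forall a b : B, sigma (a * b) = (sigma a \o sigma b)%VF
    & sigma 1 = \1%VF].

Definition is_hom (B : falgType F) (X Y : vectType F)
  (sX : B -> 'End(X)) (sY : B -> 'End(Y)) (g : 'Hom(X, Y)) :=
  forall b : B, (g \o sX b = sY b \o g)%VF.

Definition is_submod (B : falgType F) (X : vectType F) (sigma : B -> 'End(X))
  (U : {vspace X}) := forall b : B, (sigma b @: U <= U)%VS.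

(* The subquotient U/V (V <= U submodules of X) is projective as a B-module:
   lifting property, with Hom(U/V, Y) encoded as maps on X that are B-linear
   on U and vanish on V. *)
Definition subquot_projective (B : falgType F) (X : vectType F)
  (sigma : B -> 'End(X)) (U V : {vspace X}) :=
  forall (Y Z : vectType F) (sY : B -> 'End(Y)) (sZ : B -> 'End(Z)),
    is_rep sY -> is_rep sZ ->
    forall g : 'Hom(Y, Z), is_hom sY sZ g -> limg g = fullv ->
    forall h : 'Hom(X, Z), (V <= lker h)%VS ->
      (forall (b : B) (u : X), u \in U -> h (sigma b u) = sZ b (h u)) ->
    exists h' : 'Hom(X, Y),
      [/\ (V <= lker h')%VS,
          forall (b : B) (u : X), u \in U -> h' (sigma b u) = sY b (h' u)
        & forall u : X, u \in U -> g (h' u) = h u].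

Definition is_pos_graded_alg (aa : falgType F) (ga : nat -> {vspace aa}) (d : nat) :=
  [/\ forall n, (d <= n)%N -> ga n = 0%VS,
      directv (\sum_(n < d) ga n),
      (\sum_(n < d) ga n)%VS = fullv
    & forall m n, (ga m * ga n <= ga (m + n)%N)%VS].

Definition alg_geq (aa : falgType F) (ga : nat -> {vspace aa}) (d j : nat) :=
  (\sum_(n < d | (j <= n)%N) ga n)%VS.

Definition is_alg_hom (aa A : falgType F) (f : 'Hom(aa, A)) :=
  (forall x y : aa, f (x * y) = f x * f y) /\ f 1 = 1.

Definition is_twosided_ideal (A : falgType F) (I : {vspace A}) :=
  (fullv * I <= I)%VS /\ (I * fullv <= I)%VS.

Definition is_grading (X : vectType F) (gr : int -> {vspace X}) (lo : int) (len : nat) :=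
  [/\ forall i : int, (i < lo) \/ (lo + len%:Z <= i) -> gr i = 0%VS,
      directv (\sum_(k < len) gr (lo + k%:Z)%R)
    & (\sum_(k < len) gr (lo + k%:Z)%R)%VS = fullv].

Definition geq_part (X : vectType F) (gr : int -> {vspace X}) (lo : int) (len : nat)
  (j : int) := (\sum_(k < len | (j <= lo + k%:Z)%R) gr (lo + k%:Z)%R)%VS.

Definition is_graded_amod (aa A : falgType F) (ga : nat -> {vspace aa})
  (f : 'Hom(aa, A)) (X : vectType F) (rho : A -> 'End(X)) (gr : int -> {vspace X}) :=
  forall (n : nat) (i : int) (a : aa), a \in ga n ->
    (rho (f a) @: gr i <= gr (i + n%:Z)%R)%VS.

Definition is_adm_hybrid (aa A : falgType F) (ga : nat -> {vspace aa})
  (f : 'Hom(aa, A)) (X : vectType F) (rho : A -> 'End(X))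
  (gr : int -> {vspace X}) (lo : int) (len : nat) :=
  [/\ is_grading gr lo len, is_graded_amod ga f rho gr
    & forall j : int, is_submod rho (geq_part gr lo len j)].

Definition radflat (aa A : falgType F) (ga : nat -> {vspace aa}) (d : nat)
  (f : 'Hom(aa, A)) (X : vectType F) (rho : A -> 'End(X)) (U : {vspace X}) :=
  (\sum_(a <- vbasis (alg_geq ga d 1)) (rho (f a) @: U))%VS.

(* the grading obtained by placing h i in degree i: R_i = sum_n aa_n h_{i-n} *)
Definition grading_from (aa A : falgType F) (ga : nat -> {vspace aa}) (d : nat)
  (f : 'Hom(aa, A)) (X : vectType F) (rho : A -> 'End(X)) (h : int -> {vspace X})
  (i : int) :=
  (\sum_(n < d) \sum_(a <- vbasis (ga n)) (rho (f a) @: h (i - (n : nat)%:Z)%R))%VS.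

End Defs.

From HB Require Import structures.
From mathcomp Require Import all_boot all_order all_algebra falgebra.
From mathcomp Require Import zify.
From Stdlib Require Import IndefiniteDescription.
Import Order.TTheory GRing.Theory Num.Theory.
Local Open Scope ring_scope.
Set Implicit Arguments. Unset Strict Implicit. Unset Printing Implicit Defensive.

(* As ^iR/^{i+1}R is a projective aa-module, the coordinates of ^iR along a
   spanning family can be lifted aa-linearly; keeping their degree-0 parts gives an
   aa_0-linear projector of ^iR with kernel ^{i+1}R + aa_{>=1} ^iR, whose image is the
   complement h_i.  Taking the family inside ^iR /\ phi^-1(N_i) gives phi(h_i) <= N_i.
   Since aa_{>=1} is nilpotent, ^iR = aa h_i + ^{i+1}R (Nakayama), and the degree-m parts
   of the coordinates along a basis of h_i show that the sum of the aa_n h_i is direct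
   modulo ^{i+1}R.  Hence R_j = sum_n aa_n h_{j-n} grades R with ^jR <= R_{>=j}, and the
   ideal condition on f(aa_{>=n}) A makes each R_{>=j} an A-submodule. *)

Lemma vbasis_nth_mem (K : fieldType) (X : vectType K) (T : {vspace X}) (j : 'I_(\dim T)) :
  (vbasis T)`_j \in T.
Proof. by apply: vbasis_mem; apply: mem_nth; rewrite size_tuple. Qed.

Lemma int_strong_ind (P : int -> Prop) (lo : int) :
  (forall i, i < lo -> P i) -> (forall i, (forall j, j < i -> P j) -> P i) ->
  forall i, P i.
Proof.
move=> Plo Pstep; suff Pbounded t : forall i, i < lo + t%:Z -> P i.
  by move=> i; apply: (Pbounded (`|i - lo|%N + 1)%N); lia.
elim: t => [|t IHt] i ltilo; first by apply: Plo; lia.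
have [//|leti] := ltP i (lo + t%:Z); first exact: IHt.
by apply: Pstep => j ltji; apply: IHt; lia.
Qed.

Lemma int_down_ind (P : int -> Prop) (hi : int) :
  (forall i, hi <= i -> P i) -> (forall i, P (i + 1) -> P i) -> forall i, P i.
Proof.
move=> Phi Pstep; suff Pbounded t : forall i, hi <= i + t%:Z -> P i.
  by move=> i; apply: (Pbounded `|hi - i|%N); lia.
elim: t => [|t IHt] i lehi; first by apply: Phi; lia.
by apply: Pstep; apply: IHt; lia.
Qed.

Section Representation.
Variables (F : fieldType) (B : falgType F) (X : vectType F) (sigma : B -> 'End(X)).
Hypothesis Hsigma : is_rep sigma.

Lemma repL c a b x : sigma (c *: a + b) x = c *: sigma a x + sigma b x.
Proof. by case: Hsigma => -> _ _; rewrite add_lfunE scale_lfunE. Qed.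

Lemma rep0 x : sigma 0 x = 0.
Proof.
have E := repL 1 0 0 x; rewrite scale1r !addr0 scale1r in E.
by apply: (addrI (sigma 0 x)); rewrite addr0 -E.
Qed.

Lemma repD a b x : sigma (a + b) x = sigma a x + sigma b x.
Proof. by have := repL 1 a b x; rewrite !scale1r. Qed.

Lemma repZ c a x : sigma (c *: a) x = c *: sigma a x.
Proof. by rewrite -[c *: a]addr0 repL rep0 addr0. Qed.

Lemma repB a b x : sigma (a - b) x = sigma a x - sigma b x.
Proof. by rewrite repD -scaleN1r repZ scaleN1r. Qed.

Lemma rep_sum I (r : seq I) (P : pred I) (G : I -> B) x :
  sigma (\sum_(i <- r | P i) G i) x = \sum_(i <- r | P i) sigma (G i) x.
Proof. by elim/big_rec2: _ => [|i y1 y2 _ <-]; rewrite ?rep0 ?repD. Qed.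

Lemma repM a b x : sigma (a * b) x = sigma a (sigma b x).
Proof. by case: Hsigma => _ -> _; rewrite comp_lfunE. Qed.

Lemma rep1 x : sigma 1 x = x.
Proof. by case: Hsigma => _ _ ->; rewrite id_lfunE. Qed.

Definition rep_at (x : X) (a : B) := sigma a x.

Lemma rep_at_linear x : linear (rep_at x).
Proof. by move=> c a b; rewrite /rep_at repL. Qed.

HB.instance Definition _ x :=
  GRing.isLinear.Build F B X *:%R (rep_at x) (rep_at_linear x).

Definition orbit_map (x : X) : 'Hom(B, X) := linfun (rep_at x).

Lemma orbit_mapE x a : orbit_map x a = sigma a x.
Proof. exact: lfunE. Qed.

(* The product [U Y] of the paper: the span of all [sigma a y], [a \in U], [y \in Y]. *)
Definition actspan (U : {vspace B}) (Y : {vspace X}) :=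
  (\sum_(a <- vbasis U) (sigma a @: Y))%VS.

Lemma actspan_ind (P : X -> Prop) (U : {vspace B}) (Y : {vspace X}) :
  P 0 -> (forall y z, P y -> P z -> P (y + z)) ->
  (forall a x, a \in U -> x \in Y -> P (sigma a x)) ->
  forall y, y \in actspan U Y -> P y.
Proof.
move=> P0 PD Pact y; rewrite /actspan big_tuple => /memv_sumP [ys Hys ->].
apply: big_ind => // i _; have /memv_imgP [x Hx ->] := Hys i isT.
by apply: Pact => //; apply: vbasis_mem; apply: mem_tnth.
Qed.

Lemma actspan_sub (U : {vspace B}) (Y Z : {vspace X}) :
  (forall a x, a \in U -> x \in Y -> sigma a x \in Z) -> (actspan U Y <= Z)%VS.
Proof.
by move=> HZ; apply/subvP; apply: actspan_ind => //; [exact: mem0v | exact: memvD].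
Qed.

Lemma mem_actspan (U : {vspace B}) (Y : {vspace X}) a x :
  a \in U -> x \in Y -> sigma a x \in actspan U Y.
Proof.
move=> /coord_vbasis -> Yx; rewrite rep_sum; apply: memv_suml => i _.
rewrite repZ; apply: memvZ; rewrite /actspan big_tuple.
apply: (sumv_sup (Ordinal (ltn_ord i))) => //.
by rewrite (tnth_nth 0); apply: memv_img.
Qed.

Lemma sub_actspan_full (Y : {vspace X}) : (Y <= actspan fullv Y)%VS.
Proof. by apply/subvP => y Yy; rewrite -[y]rep1 mem_actspan ?memvf. Qed.

Lemma actspan0 (U : {vspace B}) : actspan U 0 = 0%VS.
Proof.
apply/eqP; rewrite -subv0; apply: actspan_sub => a x _; rewrite memv0 => /eqP ->.
by rewrite linear0 mem0v.
Qed.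

End Representation.

Lemma is_rep_comp (F : fieldType) (aa A : falgType F) (X : vectType F)
  (f : 'Hom(aa, A)) (rho : A -> 'End(X)) :
  is_rep rho -> is_alg_hom f -> is_rep (fun a => rho (f a)).
Proof.
move=> [rhoL rhoM rho1] [fM f1]; split.
- by move=> c a b; rewrite linearP rhoL.
- by move=> a b; rewrite fM rhoM.
- by rewrite f1 rho1.
Qed.

Section FreeModule.
Variables (F : fieldType) (B : falgType F) (k : nat).

Definition ffun_eval (j : 'I_k) (y : {ffun 'I_k -> B}) := y j.

Lemma ffun_eval_linear j : linear (ffun_eval j).
Proof. by move=> c y z; rewrite /ffun_eval !ffunE. Qed.

HB.instance Definition _ j :=
  GRing.isLinear.Build F {ffun 'I_k -> B} B *:%R (ffun_eval j) (ffun_eval_linear j).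

Definition ffun_lmul (b : B) (y : {ffun 'I_k -> B}) : {ffun 'I_k -> B} :=
  [ffun j => b * y j].

Lemma ffun_lmul_linear b : linear (ffun_lmul b).
Proof. by move=> c y z; apply/ffunP => j; rewrite !ffunE mulrDr scalerAr. Qed.

HB.instance Definition _ b :=
  GRing.isLinear.Build F {ffun 'I_k -> B} {ffun 'I_k -> B} *:%R (ffun_lmul b)
    (ffun_lmul_linear b).

Definition free_rep (b : B) : 'End({ffun 'I_k -> B}) := linfun (ffun_lmul b).

Lemma free_repE b y : free_rep b y = [ffun j => b * y j].
Proof. exact: lfunE. Qed.

Lemma free_rep_is_rep : is_rep free_rep.
Proof.
split.
- move=> c a b; apply/lfunP => y; rewrite add_lfunE scale_lfunE !free_repE.
  by apply/ffunP => j; rewrite !ffunE mulrDl scalerAl.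
- move=> a b; apply/lfunP => y; rewrite comp_lfunE !free_repE.
  by apply/ffunP => j; rewrite !ffunE mulrA.
- by apply/lfunP => y; rewrite id_lfunE free_repE; apply/ffunP => j; rewrite ffunE mul1r.
Qed.

End FreeModule.

Section GradedAlgebra.
Variables (F : fieldType) (aa : falgType F) (ga : nat -> {vspace aa}) (d : nat).
Hypothesis Hga : is_pos_graded_alg ga d.

Lemma ga_eq0 n : (d <= n)%N -> ga n = 0%VS.
Proof. by case: Hga => ga0 _ _ _; apply: ga0. Qed.

Lemma mem_gaM m n a b : a \in ga m -> b \in ga n -> a * b \in ga (m + n).
Proof. by case: Hga => _ _ _ gaM ma nb; apply: (subvP (gaM m n)); apply: memv_mul. Qed.

Lemma ga_sub_alg_geq m n : (m <= n)%N -> (ga n <= alg_geq ga d m)%VS.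
Proof.
move=> le_mn; have [lt_nd | le_dn] := ltnP n d.
  exact: (sumv_sup (Ordinal lt_nd)).
by rewrite ga_eq0 ?sub0v.
Qed.

Lemma alg_geq0 : alg_geq ga d 0 = fullv.
Proof. by case: Hga => _ _ gaT _; rewrite /alg_geq -gaT; apply: eq_bigl. Qed.

Lemma alg_geq_eq0 m : (d <= m)%N -> alg_geq ga d m = 0%VS.
Proof.
by move=> le_dm; rewrite /alg_geq big1 // => n le_mn; rewrite ga_eq0 ?(leq_trans le_dm).
Qed.

Lemma mem_alg_geqM m n a b :
  a \in alg_geq ga d m -> b \in alg_geq ga d n -> a * b \in alg_geq ga d (m + n).
Proof.
move=> /memv_sumP [as_ Has ->] /memv_sumP [bs Hbs ->].
rewrite mulr_suml; apply: memv_suml => k le_mk.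
rewrite mulr_sumr; apply: memv_suml => l le_nl.
apply: (subvP (ga_sub_alg_geq (leq_add le_mk le_nl))).
by apply: mem_gaM; [apply: Has | apply: Hbs].
Qed.

Definition ga_sum_def : fullv = (\sum_(n < d) ga n)%VS.
Proof. by case: Hga => _ _ ->. Defined.

Definition gproj (n : 'I_d) : 'End(aa) := sumv_pi_for ga_sum_def n.

Lemma gproj_mem n a : gproj n a \in ga n.
Proof. exact: memv_sum_pi. Qed.

Lemma gproj_sum a : \sum_(n < d) gproj n a = a.
Proof. exact: (sumv_pi_sum ga_sum_def (memvf a)). Qed.

Lemma gproj_homog m x n : x \in ga m -> gproj n x = if val n == m then x else 0.
Proof.
move=> gax; have [lt_md | le_dm] := ltnP m d; last first.
  move: gax; rewrite ga_eq0 // memv0 => /eqP ->; rewrite linear0.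
  by case: eqP => // en; move: (ltn_ord n); rewrite en ltnNge le_dm.
have [_ /directv_sum_unique uniq _ _] := Hga.
pose xs (k : 'I_d) := if val k == m then x else 0.
have xsP k : xs k \in ga k by rewrite /xs; case: eqP => [->|_]; rewrite ?mem0v.
have xsE : \sum_k xs k = x.
  rewrite (bigD1 (Ordinal lt_md)) //= /xs eqxx big1 ?addr0 // => k.
  by rewrite -val_eqE /=; case: eqP => // ->; rewrite eqxx.
have : \sum_k gproj k x == \sum_k xs k by rewrite xsE gproj_sum.
rewrite uniq // => [/forall_inP/(_ n isT)/eqP //|k _]; exact: gproj_mem.
Qed.

(* The homogeneous component of degree [m]; it is [0] for [m >= d]. *)
Definition hcomp (m : nat) : 'End(aa) := \sum_(n < d | val n == m) gproj n.

Lemma hcompE m a : hcomp m a = \sum_(n < d | val n == m) gproj n a.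
Proof. exact: sum_lfunE. Qed.

Lemma hcomp_mem m a : hcomp m a \in ga m.
Proof. by rewrite hcompE; apply: memv_suml => n /eqP <-; apply: gproj_mem. Qed.

Lemma hcomp_homog n m x : x \in ga n -> hcomp m x = if n == m then x else 0.
Proof.
move=> gax; rewrite hcompE; under eq_bigr => k _ do rewrite (gproj_homog k gax).
have [<-|ne_nm] := eqVneq n m; last first.
  by rewrite big1 // => k /eqP ekm; case: eqP => // ekn; case/eqP: ne_nm; rewrite -ekm.
have [lt_nd | le_dn] := ltnP n d; last first.
  by move: gax; rewrite ga_eq0 // memv0 => /eqP ->; rewrite big1 // => k _; case: eqP.
rewrite (bigD1 (Ordinal lt_nd)) //= eqxx big1 ?addr0 // => k /andP [/eqP ekn ne_k].
by case/negP: ne_k; rewrite -val_eqE /= ekn.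
Qed.

Lemma hcompMl n m a y : a \in ga n ->
  hcomp m (a * y) = if (n <= m)%N then a * hcomp (m - n) y else 0.
Proof.
move=> gaa; rewrite -{1}(gproj_sum y) mulr_sumr linear_sum /=.
under eq_bigr => k _ do rewrite (hcomp_homog m (mem_gaM gaa (gproj_mem k y))).
rewrite -big_mkcond /=; case: leqP => [le_nm | lt_mn].
  rewrite hcompE mulr_sumr; apply: eq_bigl => k.
  by apply/eqP/eqP => [<-|->]; [rewrite addKn | rewrite subnKC].
by rewrite big1 // => k /eqP ekm; move: lt_mn; rewrite -ekm ltnNge leq_addr.
Qed.

Lemma hcomp0_alg_geq1 a y : a \in alg_geq ga d 1 -> hcomp 0 (a * y) = 0.
Proof.
move=> /memv_sumP [as_ Has ->]; rewrite mulr_suml linear_sum big1 //= => k lt0k.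
by rewrite (hcompMl _ _ (Has k lt0k)) leqn0; case: eqP lt0k => // ->.
Qed.

Lemma sub_hcomp0 y : y - hcomp 0 y \in alg_geq ga d 1.
Proof.
rewrite -{1}(gproj_sum y) (bigID (fun n : 'I_d => val n == 0%N)) /= -hcompE addrC addrK.
apply: memv_suml => n ne_n0.
by apply: (subvP (ga_sub_alg_geq (m := 1) _)) (gproj_mem n y); rewrite lt0n.
Qed.

End GradedAlgebra.

Section SubquotientLift.
Variables (F : fieldType) (B : falgType F) (X : vectType F) (sigma : B -> 'End(X)).
Hypothesis Hsigma : is_rep sigma.
Variables U V : {vspace X}.
Hypotheses (sVU : (V <= U)%VS) (sigmaU : is_submod sigma U) (sigmaV : is_submod sigma V).

Lemma memU_rep a u : u \in U -> sigma a u \in U.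
Proof. by move=> Uu; apply: (subvP (sigmaU a)); apply: memv_img. Qed.

Lemma memV_rep a v : v \in V -> sigma a v \in V.
Proof. by move=> Vv; apply: (subvP (sigmaV a)); apply: memv_img. Qed.

(* The subquotient U/V is realised on the complement U :\: V of V in U. *)
Local Notation C := (U :\: V)%VS.

Definition subquot_map : 'Hom(X, subvs_of C) := (linfun (vsproj C) \o addv_pi1 U V)%VF.

Lemma subquot_map_val w : vsval (subquot_map w) = addv_pi1 U V w.
Proof. by rewrite comp_lfunE lfunE vsprojK //; apply: memv_pi. Qed.

Lemma subquot_map_sub w : w \in U -> w - vsval (subquot_map w) \in V.
Proof.
move=> Uw; have UVw : w \in (U + V)%VS by apply: (subvP (addvSl U V)).
by rewrite subquot_map_val -{1}(addv_pi1_pi2 UVw) addrAC subrr add0r memv_pi2.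
Qed.

Lemma subquot_map_V v : v \in V -> subquot_map v = 0.
Proof.
move=> Vv; apply: val_inj; rewrite /= subquot_map_val; apply/eqP.
rewrite -memv0 -(capv_diff U V) memv_cap memv_pi /=.
have := subquot_map_sub (subvP sVU _ Vv); rewrite subquot_map_val => Vvp.
by rewrite -[X in X \in V](subKr v) memvB.
Qed.

Lemma subquot_map_ker w : w \in U -> subquot_map w = 0 -> w \in V.
Proof. by move=> Uw w0; have := subquot_map_sub Uw; rewrite w0 [vsval 0]linear0 subr0. Qed.

Lemma subquot_map_vsval z : subquot_map (vsval z) = z.
Proof.
apply: val_inj; rewrite /= subquot_map_val /addv_pi1 daddv_pi_id ?subvsP //.
exact: capv_diff.
Qed.

Lemma subquot_map_rep a w : w \in U ->
  subquot_map (sigma a (vsval (subquot_map w))) = subquot_map (sigma a w).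
Proof.
move=> Uw; apply/eqP; rewrite -subr_eq0 -!linearB /=; apply/eqP/subquot_map_V.
by rewrite -opprB linearN memvN memV_rep // subquot_map_sub.
Qed.

Definition subquot_rep (b : B) : 'End(subvs_of C) :=
  (subquot_map \o sigma b \o linfun vsval)%VF.

Lemma subquot_repE b z : subquot_rep b z = subquot_map (sigma b (vsval z)).
Proof. by rewrite /subquot_rep !comp_lfunE !lfunE. Qed.

Lemma subquot_map_hom b u :
  u \in U -> subquot_map (sigma b u) = subquot_rep b (subquot_map u).
Proof. by move=> Uu; rewrite subquot_repE subquot_map_rep. Qed.

Lemma subquot_rep_is_rep : is_rep subquot_rep.
Proof.
have CU (z : subvs_of C) : vsval z \in U by apply: (subvP (diffvSl U V)); apply: subvsP.
split.
- move=> c a b; apply/lfunP => z; rewrite add_lfunE scale_lfunE !subquot_repE.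
  by rewrite (repL Hsigma) linearD linearZ.
- move=> a b; apply/lfunP => z.
  by rewrite comp_lfunE !subquot_repE (repM Hsigma) subquot_map_rep // memU_rep.
- by apply/lfunP => z; rewrite id_lfunE subquot_repE (rep1 Hsigma) subquot_map_vsval.
Qed.

Section Coordinates.
Variables (k : nat) (s : 'I_k -> X).

Definition combination : 'Hom({ffun 'I_k -> B}, X) :=
  (\sum_j (orbit_map sigma (s j) \o linfun (ffun_eval j)))%VF.

Lemma combinationE y : combination y = \sum_j sigma (y j) (s j).
Proof.
by rewrite sum_lfunE; apply: eq_bigr => j _; rewrite comp_lfunE (orbit_mapE Hsigma) lfunE.
Qed.

Lemma combination_rep b y : combination (free_rep k b y) = sigma b (combination y).
Proof.
rewrite !combinationE linear_sum; apply: eq_bigr => j _.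
by rewrite free_repE ffunE (repM Hsigma).
Qed.

Hypothesis sU : forall j, s j \in U.

Lemma mem_combination y : combination y \in U.
Proof. by rewrite combinationE; apply: memv_suml => j _; apply: memU_rep. Qed.

(* Projectivity of U/V lifts the surjection from the free module B^k onto U/V. *)
Lemma subquot_coord_lift :
  subquot_projective sigma U V ->
  (forall u, u \in U -> exists y, u - combination y \in V) ->
  exists H : 'Hom(X, {ffun 'I_k -> B}),
   [/\ forall v, v \in V -> H v = 0,
       forall b u, u \in U -> H (sigma b u) = [ffun j => b * H u j]
     & forall u, u \in U -> u - \sum_j sigma (H u j) (s j) \in V].
Proof.
move=> proj span; pose g := (subquot_map \o combination)%VF.
have g_hom : is_hom (free_rep k) subquot_rep g.
  move=> b; apply/lfunP => y; rewrite (comp_lfunE g) (comp_lfunE (subquot_rep b)).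
  rewrite !(comp_lfunE subquot_map combination) combination_rep.
  by rewrite subquot_map_hom // mem_combination.
have g_surj : limg g = fullv.
  apply/eqP; rewrite eqEsubv subvf /=; apply/subvP => z _.
  have [y Vy] := span _ (subvP (diffvSl U V) _ (subvsP z)).
  suff -> : z = g y by apply: memv_img; apply: memvf.
  apply/eqP; rewrite comp_lfunE -subr_eq0 -{1}(subquot_map_vsval z) -linearB /=.
  by rewrite subquot_map_V.
have V_ker : (V <= lker subquot_map)%VS.
  by apply/subvP => v Vv; rewrite memv_ker subquot_map_V.
have [H [VH UH gH]] := proj _ _ _ _ (free_rep_is_rep B k) subquot_rep_is_rep
  g g_hom g_surj subquot_map V_ker subquot_map_hom.
exists H; split.
- by move=> v Vv; apply/eqP; rewrite -memv_ker (subvP VH).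
- by move=> b u Uu; rewrite UH // free_repE.
- move=> u Uu; rewrite -combinationE -memvN opprB; apply: subquot_map_ker.
    by rewrite memvB // mem_combination.
  by rewrite linearB /= -(comp_lfunE subquot_map) gH // subrr.
Qed.

End Coordinates.

Lemma coord_lift_vbasis (T : {vspace X}) :
  (T <= U)%VS -> (U <= actspan sigma fullv T + V)%VS -> subquot_projective sigma U V ->
  exists H : 'Hom(X, {ffun 'I_(\dim T) -> B}),
   [/\ forall v, v \in V -> H v = 0,
       forall b u, u \in U -> H (sigma b u) = [ffun j => b * H u j]
     & forall u, u \in U -> u - \sum_j sigma (H u j) (vbasis T)`_j \in V].
Proof.
move=> sTU sUTV proj; pose s (j : 'I_(\dim T)) := (vbasis T)`_j.
apply: (subquot_coord_lift (s := s)) => // [j|u /(subvP sUTV) /memv_addP [g Tg [v Vv ->]]].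
  exact/(subvP sTU)/vbasis_nth_mem.
suff [y ->] : exists y, g = combination s y by exists y; rewrite addrAC subrr add0r.
move: g Tg; apply: actspan_ind.
- by exists 0; rewrite linear0.
- by move=> y1 y2 [c1 ->] [c2 ->]; exists (c1 + c2); rewrite linearD.
- move=> a x _ Tx; exists [ffun j => coord (vbasis T) j x *: a].
  rewrite combinationE {1}(coord_vbasis Tx) linear_sum; apply: eq_bigr => j _.
  by rewrite ffunE linearZ (repZ Hsigma).
Qed.

End SubquotientLift.

Lemma projector_complement (K : fieldType) (X : vectType K) (U W : {vspace X})
  (p : 'End(X)) : (W <= U)%VS -> (forall w, w \in W -> p w = 0) ->
  (forall u, u \in U -> u - p u \in W) ->
  ((p @: U) :&: W = 0)%VS /\ (p @: U + W = U)%VS.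
Proof.
move=> sWU pW subp; have pU u : u \in U -> p u \in U.
  move=> Uu; have -> : p u = u - (u - p u) by rewrite opprB addrC subrK.
  by rewrite memvB // (subvP sWU) // subp.
split.
  apply/eqP; rewrite -subv0; apply/subvP => _ /[!memv_cap] /andP [/memv_imgP [u Uu ->] Wpu].
  have -> : p u = p (p u) - p (p u - u) by rewrite linearB /= opprB addrC subrK.
  have Wpuu : p u - u \in W by rewrite -memvN opprB subp.
  by rewrite (pW _ Wpu) (pW _ Wpuu) subrr mem0v.
apply/eqP; rewrite eqEsubv subv_add sWU andbT; apply/andP; split.
  by apply/subvP => _ /memv_imgP [u Uu ->]; apply: pU.
by apply/subvP => u Uu; rewrite -[u](subrK (p u)) addrC memv_add ?memv_img ?subp.
Qed.

Section CoordinateProjection.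
Variables (F : fieldType) (aa : falgType F) (ga : nat -> {vspace aa}) (d : nat).
Hypothesis Hga : is_pos_graded_alg ga d.
Variables (X : vectType F) (sigma : aa -> 'End(X)).
Hypothesis Hsigma : is_rep sigma.
Variables (U V : {vspace X}) (k : nat) (s : 'I_k -> X) (H : 'Hom(X, {ffun 'I_k -> aa})).
Hypotheses (sU : forall j, s j \in U) (H_V : forall v, v \in V -> H v = 0)
  (H_rep : forall b u, u \in U -> H (sigma b u) = [ffun j => b * H u j])
  (H_split : forall u, u \in U -> u - \sum_j sigma (H u j) (s j) \in V).

Local Notation radV := (V + actspan sigma (alg_geq ga d 1) U)%VS.

(* [u] re-expanded along [s] with only the degree-[m] parts of its coordinates [H u]. *)
Definition coord_part (m : nat) : 'End(X) :=
  (\sum_j (orbit_map sigma (s j) \o hcomp Hga m \o linfun (ffun_eval j) \o H))%VF.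

Lemma coord_partE m u : coord_part m u = \sum_j sigma (hcomp Hga m (H u j)) (s j).
Proof.
rewrite sum_lfunE; apply: eq_bigr => j _.
by rewrite !comp_lfunE (orbit_mapE Hsigma) lfunE.
Qed.

Lemma coord_part_V m v : v \in V -> coord_part m v = 0.
Proof.
move=> Vv; rewrite coord_partE big1 // => j _.
by rewrite H_V // ffunE linear0 (rep0 Hsigma).
Qed.

Lemma coord_part_rep n m a u : a \in ga n -> u \in U ->
  coord_part m (sigma a u) = if (n <= m)%N then sigma a (coord_part (m - n) u) else 0.
Proof.
move=> gaa Uu; rewrite !coord_partE.
under eq_bigr => j _ do rewrite H_rep // ffunE (hcompMl _ _ _ gaa).
case: leqP => _; last by rewrite big1 // => j _; rewrite (rep0 Hsigma).
by rewrite linear_sum; apply: eq_bigr => j _; rewrite (repM Hsigma).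
Qed.

Lemma coord_part0_rad w : w \in radV -> coord_part 0 w = 0.
Proof.
case/memv_addP => v Vv [r rad_r ->]; rewrite linearD /= coord_part_V // add0r.
move: r rad_r; apply: actspan_ind => [|y z Py Pz|a u ga1a Uu].
- exact: linear0.
- by rewrite linearD /= Py Pz addr0.
rewrite coord_partE big1 // => j _.
by rewrite H_rep // ffunE hcomp0_alg_geq1 // (rep0 Hsigma).
Qed.

Lemma sub_coord_part0 u : u \in U -> u - coord_part 0 u \in radV.
Proof.
move=> Uu; have -> : u - coord_part 0 u = (u - \sum_j sigma (H u j) (s j)) +
    \sum_j sigma (H u j - hcomp Hga 0 (H u j)) (s j).
  rewrite coord_partE; under [X in _ = _ + X]eq_bigr => j _ do rewrite (repB Hsigma).
  by rewrite sumrB addrA subrK.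
rewrite memv_add ?H_split //; apply: memv_suml => j _.
by rewrite mem_actspan // sub_hcomp0.
Qed.

Lemma coord_part0_mem (T : {vspace X}) u : (forall j, s j \in T) ->
  (forall c x, c \in ga 0 -> x \in T -> sigma c x \in T) -> coord_part 0 u \in T.
Proof.
by move=> sT T0 ; rewrite coord_partE; apply: memv_suml => j _; rewrite T0 ?hcomp_mem.
Qed.

Variable T : {vspace X}.
Hypotheses (sT : forall j, s j \in T) (sTU : (T <= U)%VS)
  (T0 : forall c x, c \in ga 0 -> x \in T -> sigma c x \in T)
  (capT : (T :&: radV)%VS = 0%VS).

Lemma coord_part0_id x : x \in T -> coord_part 0 x = x.
Proof.
move=> Tx; apply/eqP; rewrite eq_sym -subr_eq0 -memv0 -capT memv_cap.
by rewrite memvB ?coord_part0_mem ?sub_coord_part0 ?(subvP sTU).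
Qed.

Lemma coord_part_actspan_id m y : y \in actspan sigma (ga m) T -> coord_part m y = y.
Proof.
move: y; apply: actspan_ind => [|y z Py Pz|a x gaa Tx].
- exact: linear0.
- by rewrite linearD /= Py Pz.
by rewrite (coord_part_rep _ gaa) ?(subvP sTU) // leqnn subnn coord_part0_id.
Qed.

Lemma coord_part_actspan_lt n m y :
  (m < n)%N -> y \in actspan sigma (ga n) T -> coord_part m y = 0.
Proof.
move=> lt_mn; move: y; apply: actspan_ind => [|y z Py Pz|a x gaa Tx].
- exact: linear0.
- by rewrite linearD /= Py Pz addr0.
by rewrite (coord_part_rep _ gaa) ?(subvP sTU) // leqNgt lt_mn.
Qed.

(* The components of the sum are peeled off degree by degree with [coord_part]. *)
Lemma actspan_homog_direct (z : 'I_d -> X) :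
  (forall n, z n \in actspan sigma (ga n) T) -> \sum_n z n \in V -> forall n, z n = 0.
Proof.
move=> zT Vz; suff zlt m : forall n : 'I_d, (n < m)%N -> z n = 0.
  by move=> n; apply: (zlt d).
elim: m => [//|m IHm] n0; rewrite ltnS leq_eqVlt => /orP [/eqP n0m|]; last exact: IHm.
have := coord_part_V m Vz; rewrite linear_sum (bigD1 n0) //= -n0m.
rewrite coord_part_actspan_id // big1 ?addr0 // => n ne_nn0.
have [lt_nn0|lt_n0n|/val_inj eq_nn0] := ltngtP n n0.
- by rewrite IHm ?linear0 // -n0m.
- exact: (coord_part_actspan_lt lt_n0n).
- by case/eqP: ne_nn0.
Qed.

End CoordinateProjection.

Section Construction.
Variables (F : fieldType) (aa A : falgType F) (ga : nat -> {vspace aa}) (d : nat)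
  (f : 'Hom(aa, A)).
Hypotheses (Hga : is_pos_graded_alg ga d) (Hf : is_alg_hom f).
Variables (R : vectType F) (rhoR : A -> 'End(R)).
Hypothesis HrhoR : is_rep rhoR.
Variable filt : int -> {vspace R}.
Hypotheses (Hfilt_sub : forall i, is_submod rhoR (filt i))
  (Hfilt_dec : forall i : int, (filt (i + 1) <= filt i)%VS)
  (Hfilt_proj : forall i,
     subquot_projective (fun a : aa => rhoR (f a)) (filt i) (filt (i + 1))).
Variables (N : vectType F) (rhoN : A -> 'End(N)) (grN : int -> {vspace N})
  (loN : int) (lenN : nat).
Hypothesis HN : is_adm_hybrid ga f rhoN grN loN lenN.
Variable phi : 'Hom(R, N).
Hypotheses (Hphi : is_hom rhoR rhoN phi)
  (Hphi_filt : forall i, (phi @: filt i)%VS = geq_part grN loN lenN i).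

(* [radflat] and [grading_from] unfold to instances of [actspan sigma]. *)
Local Notation sigma := (fun a : aa => rhoR (f a)).
Let Hsigma : is_rep sigma := is_rep_comp HrhoR Hf.
Local Notation rad i := (filt (i + 1) + radflat ga d f rhoR (filt i))%VS.

Lemma filt_submod i : is_submod sigma (filt i).
Proof. by move=> a; apply: Hfilt_sub. Qed.

Lemma mem_filt_rep b i u : u \in filt i -> rhoR b u \in filt i.
Proof. by move=> Uu; apply: (subvP (Hfilt_sub i b)); apply: memv_img. Qed.

Lemma filt_le i j : i <= j -> (filt j <= filt i)%VS.
Proof.
move=> le_ij; have -> : j = i + `|j - i|%N%:Z by lia.
elim: `|j - i|%N => [|n IHn]; first by rewrite addr0.
by apply: subv_trans IHn; rewrite -[n.+1]addn1 PoszD addrA.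
Qed.

Lemma rad_filt i : (rad i <= filt i)%VS.
Proof.
by rewrite subv_add Hfilt_dec; apply: actspan_sub => a x _; apply: mem_filt_rep.
Qed.

Lemma phi_rep a x : phi (rhoR (f a) x) = rhoN (f a) (phi x).
Proof. by have /lfunP/(_ x) := Hphi (f a); rewrite !comp_lfunE. Qed.

Lemma mem_grN_rep n i a x :
  a \in ga n -> x \in grN i -> rhoN (f a) x \in grN (i + n%:Z).
Proof.
by case: HN => _ HgrN _ gaa grx; apply: (subvP (HgrN n i a gaa)); apply: memv_img.
Qed.

Lemma geq_partN_split i :
  (geq_part grN loN lenN i <= grN i + geq_part grN loN lenN (i + 1))%VS.
Proof.
apply/subv_sumP => k le_ik; have [<-|ne_ki] := eqVneq (loN + k%:Z) i.
  exact: addvSl.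
apply: subv_trans (addvSr _ _); apply: (sumv_sup k) => //.
by rewrite lezD1 lt_neqAle eq_sym ne_ki.
Qed.

(* h_i is chosen inside [lifts i]; this is what gives phi(h_i) <= N_i. *)
Definition lifts i := (filt i :&: phi @^-1: grN i)%VS.

Lemma lifts_filt i : (lifts i <= filt i)%VS.
Proof. exact: capvSl. Qed.

Lemma phi_lifts i x : x \in lifts i -> phi x \in grN i.
Proof. by rewrite memv_cap memv_preim => /andP []. Qed.

Lemma lifts_rep0 i c x : c \in ga 0 -> x \in lifts i -> rhoR (f c) x \in lifts i.
Proof.
move=> ga0c; rewrite !memv_cap -!memv_preim => /andP [filt_x grN_x].
by rewrite mem_filt_rep //= phi_rep -[i]addr0 mem_grN_rep.
Qed.

Lemma filt_sub_lifts i : (filt i <= lifts i + filt (i + 1))%VS.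
Proof.
apply/subvP => u filt_u; have := memv_img phi filt_u.
rewrite Hphi_filt => /(subvP (geq_partN_split i)) /memv_addP [n0 grN_n0 [n1]].
rewrite -Hphi_filt => /memv_imgP [v filt_v ->] phi_u; rewrite -[u](subrK v).
have filt_iv : v \in filt i := subvP (Hfilt_dec i) _ filt_v.
by rewrite memv_add // memv_cap memvB //= -memv_preim linearB /= phi_u addrK.
Qed.

Lemma exists_graded_complement i : exists hh : {vspace R},
  [/\ (hh <= lifts i)%VS, (hh :&: rad i)%VS = 0%VS, (hh + rad i)%VS = filt i
    & forall c, c \in ga 0 -> (rhoR (f c) @: hh <= hh)%VS].
Proof.
have span : (filt i <= actspan sigma fullv (lifts i) + filt (i + 1))%VS.
  by apply: subv_trans (filt_sub_lifts i) _; rewrite addvS ?sub_actspan_full.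
have [H [H_V H_rep H_split]] := coord_lift_vbasis Hsigma (Hfilt_dec i)
  (filt_submod i) (filt_submod (i + 1)) (lifts_filt i) span (@Hfilt_proj i).
pose s (j : 'I_(\dim (lifts i))) := (vbasis (lifts i))`_j.
have s_lifts j : s j \in lifts i by apply: vbasis_nth_mem.
have s_filt j : s j \in filt i by apply/(subvP (lifts_filt i)).
pose p := coord_part Hga sigma s H 0.
have [cap_p add_p] := projector_complement (p := p) (rad_filt i)
  (coord_part0_rad Hga Hsigma s H_V H_rep) (sub_coord_part0 Hga Hsigma s_filt H_split).
exists (p @: filt i)%VS; split => //.
  apply/subvP => _ /memv_imgP [u _ ->].
  exact: (coord_part0_mem Hga Hsigma H u s_lifts (@lifts_rep0 i)).
move=> c ga0c; apply/subvP => _ /memv_imgP [_ /memv_imgP [u filt_u ->] ->].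
have /= := coord_part_rep Hga Hsigma s H_rep 0 ga0c filt_u; rewrite subn0 => <-.
by rewrite memv_img ?mem_filt_rep.
Qed.

Definition h i : {vspace R} :=
  proj1_sig (constructive_indefinite_description _ (exists_graded_complement i)).

Lemma h_spec i :
  [/\ (h i <= lifts i)%VS, (h i :&: rad i)%VS = 0%VS, (h i + rad i)%VS = filt i
    & forall c, c \in ga 0 -> (rhoR (f c) @: h i <= h i)%VS].
Proof.
exact: proj2_sig (constructive_indefinite_description _ (exists_graded_complement i)).
Qed.

Lemma h_lifts i : (h i <= lifts i)%VS. Proof. by case: (h_spec i). Qed.
Lemma h_cap i : (h i :&: rad i)%VS = 0%VS. Proof. by case: (h_spec i). Qed.
Lemma h_add i : (h i + rad i)%VS = filt i. Proof. by case: (h_spec i). Qed.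

Lemma h_filt i : (h i <= filt i)%VS.
Proof. exact: subv_trans (h_lifts i) (lifts_filt i). Qed.

Lemma h_complement i :
  [/\ (h i <= filt i)%VS, (h i :&: rad i)%VS = 0%VS, (h i + rad i)%VS = filt i
    & forall c, c \in ga 0 -> (rhoR (f c) @: h i <= h i)%VS].
Proof. by case: (h_spec i) => _ *; split; rewrite ?h_filt. Qed.

Lemma h_rep0 i c x : c \in ga 0 -> x \in h i -> rhoR (f c) x \in h i.
Proof.
by case: (h_spec i) => _ _ _ h0 ga0c hx; apply: (subvP (h0 c ga0c)); apply: memv_img.
Qed.

(* Nakayama's lemma: iterate [^iR = h_i + ^{i+1}R + aa_{>=1} ^iR], which
   terminates because aa_{>=d} = 0. *)
Lemma filt_sub_span_h i : (filt i <= actspan sigma fullv (h i) + filt (i + 1))%VS.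
Proof.
set T := (_ + _)%VS.
suff nil n m : (d <= m + n)%N ->
    forall a u, a \in alg_geq ga d m -> u \in filt i -> rhoR (f a) u \in T.
  by apply/subvP => u filt_u; rewrite -[u](rep1 Hsigma) (nil d 0) ?alg_geq0 ?memvf.
elim: n m => [|n IHn] m.
  rewrite addn0 => le_dm a u; rewrite alg_geq_eq0 // memv0 => /eqP -> _.
  by rewrite (rep0 Hsigma) mem0v.
rewrite addnS -addSn => /IHn IHm a u ga_a; rewrite -h_add.
case/memv_addP => x hx [_ /memv_addP [v filt_v [r rad_r ->]] ->].
rewrite !linearD /= memvD ?memvD //.
- by rewrite (subvP (addvSl _ _)) // mem_actspan ?memvf.
- by rewrite (subvP (addvSr _ _)) // mem_filt_rep.
move: r rad_r; apply: actspan_ind => [|y z Ty Tz|b x' ga_b filt_x'].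
- by rewrite linear0 mem0v.
- by rewrite linearD memvD.
by rewrite -(repM Hsigma) IHm // -addn1 mem_alg_geqM.
Qed.

Lemma h_span_direct i (z : 'I_d -> R) :
  (forall n, z n \in actspan sigma (ga n) (h i)) -> \sum_n z n \in filt (i + 1) ->
  forall n, z n = 0.
Proof.
have [H [H_V H_rep H_split]] := coord_lift_vbasis Hsigma (Hfilt_dec i)
  (filt_submod i) (filt_submod (i + 1)) (h_filt i) (filt_sub_span_h i) (@Hfilt_proj i).
apply: (actspan_homog_direct Hga Hsigma _ H_V H_rep H_split (@vbasis_nth_mem _ _ _)
  (h_filt i) (@h_rep0 i) (h_cap i)).
by move=> j; apply/(subvP (h_filt i))/vbasis_nth_mem.
Qed.

Lemma actspan_h_filt U t : (actspan sigma U (h t) <= filt t)%VS.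
Proof.
by apply: actspan_sub => a x _ hx; apply: mem_filt_rep; apply: (subvP (h_filt t)).
Qed.

Variables i0 i1 : int.
Hypotheses (Hlo : forall i, i <= i0 -> filt i = fullv)
  (Hhi : forall i, i1 <= i -> filt i = 0%VS).

Local Notation lenR := (`|i1 - i0|%N + d)%N.
Local Notation grR := (grading_from ga d f rhoR h).
Local Notation geqR j := (geq_part grR i0 lenR j).

Lemma h_eq0_hi i : i1 <= i -> h i = 0%VS.
Proof. by move=> le_i1i; apply/eqP; rewrite -subv0 -(Hhi le_i1i) h_filt. Qed.

Lemma h_eq0_lo i : i < i0 -> h i = 0%VS.
Proof.
move=> lt_ii0; have radT : rad i = fullv.
  by apply/eqP; rewrite eqEsubv subvf /= Hlo ?addvSl //; lia.
by have := h_cap i; rewrite radT capvf.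
Qed.

Lemma mem_grR_rep k l a x : a \in ga k -> x \in h l -> rhoR (f a) x \in grR (l + k%:Z).
Proof.
move=> gaa hx; have [lt_kd | le_dk] := ltnP k d; last first.
  by move: gaa; rewrite (ga_eq0 Hga) // memv0 => /eqP ->; rewrite (rep0 Hsigma) mem0v.
apply: (subvP (sumv_sup (Ordinal lt_kd) isT (subvv _))) => /=.
by rewrite addrK (mem_actspan Hsigma).
Qed.

Lemma grR_eq0 i : i < i0 \/ i0 + lenR%:Z <= i -> grR i = 0%VS.
Proof.
move=> out_i; rewrite /grading_from big1 // => n _.
have -> : h (i - n%:Z) = 0%VS.
  case: out_i => [lt_ii0|le_i]; first by apply: h_eq0_lo; lia.
  by apply: h_eq0_hi; have := ltn_ord n; lia.
exact: (actspan0 (fun a : aa => rhoR (f a))).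
Qed.

Lemma grR_sub_geqR j t : j <= t -> (grR t <= geqR j)%VS.
Proof.
move=> le_jt; have [/andP [le_i0t lt_t]|] := boolP ((i0 <= t) && (t < i0 + lenR%:Z)).
  have lt_k : (`|t - i0|%N < lenR)%N by lia.
  by apply: (sumv_sup (Ordinal lt_k)) => /=; rewrite (_ : i0 + _ = t) //; lia.
by rewrite negb_and -ltNge -leNgt => /orP out_t; rewrite grR_eq0 ?sub0v.
Qed.

Lemma geqR_le j j' : j <= j' -> (geqR j' <= geqR j)%VS.
Proof.
move=> le_jj'; apply/subv_sumP => k le_j'k.
by apply: (sumv_sup k) => //; apply: le_trans le_j'k.
Qed.

(* By descending induction on i, using ^iR = aa h_i + ^{i+1}R. *)
Lemma rep_filt_geqR i m a y :
  a \in alg_geq ga d m -> y \in filt i -> rhoR (f a) y \in geqR (i + m%:Z).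
Proof.
move: i m a y; apply: (int_down_ind (hi := i1)) => [i le_i1i|i IHi] m a y ga_a.
  by rewrite Hhi // memv0 => /eqP ->; rewrite linear0 mem0v.
move/(subvP (filt_sub_span_h i))/memv_addP => [g hg [v filt_v ->]].
rewrite linearD /= memvD //; last first.
  by apply: (subvP (geqR_le _)) (IHi m a v ga_a filt_v); lia.
move: g hg; apply: actspan_ind => [|y1 y2 geq_y1 geq_y2|c x _ hx].
- by rewrite linear0 mem0v.
- by rewrite linearD memvD.
rewrite -(repM Hsigma); have /memv_sumP [b gab ->] : a * c \in alg_geq ga d m.
  by rewrite -[m]addn0 (mem_alg_geqM Hga) // (alg_geq0 Hga) memvf.
rewrite (rep_sum Hsigma) memv_suml // => n le_mn.
by apply: (subvP (grR_sub_geqR (t := i + n%:Z) _)); [lia | rewrite mem_grR_rep ?gab].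
Qed.

Lemma grR_sum : (\sum_(k < lenR) grR (i0 + k%:Z))%VS = fullv.
Proof.
apply/eqP; rewrite eqEsubv subvf /= -(Hlo (lexx i0)); apply/subvP => y filt_y.
have ga_1 : 1 \in alg_geq ga d 0 by rewrite (alg_geq0 Hga) memvf.
have := rep_filt_geqR ga_1 filt_y; rewrite (rep1 Hsigma) addr0; apply: subvP.
by apply/subv_sumP => k _; apply: (sumv_sup k).
Qed.

Lemma grR_level_eq0 (z : 'I_lenR -> 'I_d -> R) i :
  (forall (k : 'I_lenR) (n : 'I_d),
     z k n \in actspan sigma (ga n) (h (i0 + k%:Z - n%:Z))) ->
  \sum_k \sum_n z k n = 0 ->
  (forall (k : 'I_lenR) (n : 'I_d), i0 + k%:Z - n%:Z < i -> z k n = 0) ->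
  forall (k : 'I_lenR) (n : 'I_d), i0 + k%:Z - n%:Z = i -> z k n = 0.
Proof.
move=> zh z_sum0 z_lt.
pose w (n : 'I_d) := \sum_(k < lenR | i0 + k%:Z - n%:Z == i) z k n.
have w_h n : w n \in actspan sigma (ga n) (h i).
  by apply: memv_suml => k /eqP <-; apply: zh.
have w_filt : \sum_n w n \in filt (i + 1).
  pose rest (n : 'I_d) := \sum_(k < lenR | i0 + k%:Z - n%:Z != i) z k n.
  have w_rest : \sum_n (w n + rest n) = 0.
    rewrite -[RHS]z_sum0 exchange_big; apply: eq_bigr => n _.
    by rewrite [RHS](bigID (fun k : 'I_lenR => i0 + k%:Z - n%:Z == i)).
  move/eqP: w_rest; rewrite big_split addr_eq0 => /eqP ->.
  rewrite memvN; apply: memv_suml => n _; apply: memv_suml => k /eqP ne_ki.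
  have [lt_ki|le_ik] := ltP (i0 + k%:Z - n%:Z) i; first by rewrite z_lt ?mem0v.
  have le_lev : i + 1 <= i0 + k%:Z - n%:Z by lia.
  by apply: (subvP (filt_le le_lev)); apply: (subvP (actspan_h_filt _ _)); apply: zh.
move=> k n lev_kn; have := h_span_direct w_h w_filt n; rewrite /w (big_pred1 k) // => k'.
by apply/eqP/eqP => [lev_k'n|->//]; apply: val_inj => /=; lia.
Qed.

Lemma grR_grading : is_grading grR i0 lenR.
Proof.
split; [exact: grR_eq0 | | exact: grR_sum].
apply/directv_sum_independent => us grR_us sum_us.
have /fin_all_exists2 [z zh us_z] : forall k : 'I_lenR, exists2 zk : 'I_d -> R,
    forall n : 'I_d, zk n \in actspan sigma (ga n) (h (i0 + k%:Z - n%:Z))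
  & us k = \sum_n zk n.
  by move=> k; have /memv_sumP [zk zkh ->] := grR_us k isT; exists zk => // n; apply: zkh.
have z0 i : forall (k : 'I_lenR) (n : 'I_d), i0 + k%:Z - n%:Z = i -> z k n = 0.
  move: i; apply: (int_strong_ind (lo := i0)) => [i lt_ii0|i IHi] k n lev_kn.
    by have := zh k n; rewrite lev_kn h_eq0_lo // actspan0 memv0 => /eqP.
  apply: grR_level_eq0 lev_kn => // [|k' n' lt_lev]; last exact: IHi lt_lev _ _ _.
  by rewrite -[RHS]sum_us; apply: eq_bigr => k' _; rewrite us_z.
by move=> k _; rewrite us_z big1 // => n _; apply: (z0 (i0 + k%:Z - n%:Z)).
Qed.

Lemma grR_sub i (W : {vspace R}) :
  (forall (n : 'I_d) c x, c \in ga n -> x \in h (i - n%:Z) -> rhoR (f c) x \in W) ->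
  (grR i <= W)%VS.
Proof. by move=> HW; apply/subv_sumP => n _; apply: actspan_sub => c x; apply: HW. Qed.

Lemma grR_graded : is_graded_amod ga f rhoR grR.
Proof.
move=> n i a gaa; apply/subvP => _ /memv_imgP [y grR_y ->]; rewrite memv_preim.
move: y grR_y; apply/subvP/grR_sub => m c x gac hx; rewrite -memv_preim -(repM Hsigma).
rewrite (_ : i + n%:Z = i - m%:Z + (n + m)%N%:Z); last by lia.
by rewrite mem_grR_rep ?(mem_gaM Hga).
Qed.

Lemma phi_h i : (phi @: h i <= grN i)%VS.
Proof. by apply/subvP => _ /memv_imgP [x hx ->]; apply/phi_lifts/(subvP (h_lifts i)). Qed.

Lemma phi_grR i : (phi @: grR i <= grN i)%VS.
Proof.
apply/subvP => _ /memv_imgP [y grR_y ->]; rewrite memv_preim.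
move: y grR_y; apply/subvP/grR_sub => n c x gac hx; rewrite -memv_preim /= phi_rep.
by rewrite -[i](subrK n%:Z) mem_grN_rep // (subvP (phi_h _)) ?memv_img.
Qed.

Hypothesis Hideal : forall j : nat, is_twosided_ideal (f @: alg_geq ga d j * fullv)%VS.

Lemma ideal_rep_geqR t n v x :
  v \in (f @: alg_geq ga d n * fullv)%VS -> x \in filt t -> rhoR v x \in geqR (t + n%:Z).
Proof.
move=> Iv filt_x; rewrite -(orbit_mapE HrhoR) memv_preim; move: v Iv; apply/subvP.
apply/prodvP => _ w /memv_imgP [a ga_a ->] _.
by rewrite -memv_preim (orbit_mapE HrhoR) (repM HrhoR) rep_filt_geqR ?mem_filt_rep.
Qed.

(* As f(aa_{>=n}) A is a two-sided ideal, A f(aa_n) <= f(aa_{>=n}) A; and aa_{>=n}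
   maps A ^tR = ^tR into degrees >= t + n. *)
Lemma geqR_submod j : is_submod rhoR (geqR j).
Proof.
move=> b; apply/subvP => _ /memv_imgP [y geq_y ->]; rewrite memv_preim.
move: y geq_y; apply/subvP/subv_sumP => k le_jk; apply: grR_sub => n c x gac hx.
rewrite -memv_preim /= -(repM HrhoR).
have Ibfc : b * f c \in (f @: alg_geq ga d n * fullv)%VS.
  case: (Hideal n) => I_left _; apply: (subvP I_left); rewrite memv_mul ?memvf //.
  rewrite -[f c]mulr1 memv_mul ?memvf ?memv_img //.
  exact: (subvP (ga_sub_alg_geq Hga (leqnn n))).
apply: (subvP (geqR_le _)) (ideal_rep_geqR Ibfc (subvP (h_filt _) _ hx)); lia.
Qed.

Lemma grR_adm_hybrid : is_adm_hybrid ga f rhoR grR i0 lenR.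
Proof. by split; [exact: grR_grading | exact: grR_graded | exact: geqR_submod]. Qed.

End Construction.

Unset Implicit Arguments.

Theorem proposition8p7
  (F : fieldType) (aa A : falgType F)
  (ga : nat -> {vspace aa}) (d : nat) (f : 'Hom(aa, A))
  (Hga : is_pos_graded_alg ga d)
  (Hf : is_alg_hom f)
  (Hideal : forall j : nat, is_twosided_ideal (f @: alg_geq ga d j * fullv)%VS)
  (R : vectType F) (rhoR : A -> 'End(R)) (HrhoR : is_rep rhoR)
  (filt : int -> {vspace R})
  (Hfilt_sub : forall i, is_submod rhoR (filt i))
  (Hfilt_dec : forall i : int, (filt (i + 1)%R <= filt i)%VS)
  (Hfilt_lo : exists i0 : int, forall i, i <= i0 -> filt i = fullv)
  (Hfilt_hi : exists i1 : int, forall i, i1 <= i -> filt i = 0%VS)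
  (Hfilt_proj : forall i, subquot_projective (fun a : aa => rhoR (f a))
                                             (filt i) (filt (i + 1)%R))
  (N : vectType F) (rhoN : A -> 'End(N)) (HrhoN : is_rep rhoN)
  (grN : int -> {vspace N}) (loN : int) (lenN : nat)
  (HN : is_adm_hybrid ga f rhoN grN loN lenN)
  (phi : 'Hom(R, N)) (Hphi : is_hom rhoR rhoN phi) (Hphi_surj : limg phi = fullv)
  (Hphi_filt : forall i, (phi @: filt i)%VS = geq_part grN loN lenN i) :
  exists h : int -> {vspace R},
    [/\ forall i,
          [/\ (h i <= filt i)%VS,
              (h i :&: (filt (i + 1)%R + radflat ga d f rhoR (filt i)))%VS = 0%VS,
              (h i + (filt (i + 1)%R + radflat ga d f rhoR (filt i)))%VS = filt i
            & forall a : aa, a \in ga 0%N -> (rhoR (f a) @: h i <= h i)%VS],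
        forall i, (phi @: h i <= grN i)%VS
      & exists (loR : int) (lenR : nat),
          is_adm_hybrid ga f rhoR (grading_from ga d f rhoR h) loR lenR /\
          forall i, (phi @: grading_from ga d f rhoR h i <= grN i)%VS].
Proof.
have [i0 Hlo] := Hfilt_lo; have [i1 Hhi] := Hfilt_hi.
exists (h Hga Hf HrhoR Hfilt_sub Hfilt_dec Hfilt_proj HN Hphi Hphi_filt); split.
- exact: h_complement.
- exact: phi_h.
exists i0, (`|i1 - i0|%N + d)%N; split.
  exact: grR_adm_hybrid Hlo Hhi Hideal.
exact: phi_grR.
Qed.
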